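(* Let $n$ be an even positive integer, let $V_0=\{v\in\{-1,1\}^n : v_1=1,\ \sum_i v_i=0\}$, let $P(V_0)=\{\sum_{v\in W}v : W\subseteq V_0\}$, and let $g(V_0)=\frac12\sum_{v\in V_0}v$. (1) If $n$ is not a power of $2$, then $g(V_0)\in P(V_0)$. (2) If $n$ is a power of $2$ and $n>2$, let $w\in\mathbb{Z}^n$ be given by $w_i=1$ if $i\not\equiv 0\pmod 4$ and $w_i=-3$ if $i\equiv 0\pmod 4$. Then $g(V_0)-\frac12 w\in P(V_0)$. *)

From mathcomp Require Import all_boot all_order all_algebra.
Set Implicit Arguments. Unset Strict Implicit. Unset Printing Implicit Defensive.
Import Order.TTheory GRing.Theory Num.Theory.
Local Open Scope ring_scope.

(* A vector of {-1,1}^n is encoded by its sign pattern b : {ffun 'I_n -> bool};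
   sgnv b is the actual vector (as a row vector over rat). Coordinates are
   0-indexed: coordinate v_i of the paper is entry (i-1). *)
Definition sgnb (x : bool) : rat := if x then 1 else -1.

Definition sgnv (n : nat) (b : {ffun 'I_n -> bool}) : 'rV[rat]_n :=
  \row_i sgnb (b i).

Definition V0 (n : nat) : {set {ffun 'I_n -> bool}} :=
  [set b | [forall i : 'I_n, (val i == 0)%N ==> (sgnv b 0 i == 1)]
           && (\sum_(i < n) sgnv b 0 i == 0)].

Definition inPV0 (n : nat) (x : 'rV[rat]_n) : Prop :=
  exists W : {set {ffun 'I_n -> bool}},
    W \subset V0 n /\ x = \sum_(b in W) sgnv b.

Definition gV0 (n : nat) : 'rV[rat]_n := 2^-1 *: \sum_(b in V0 n) sgnv b.

Definition wvec (n : nat) : 'rV[rat]_n :=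
  \row_(j < n) (if ((val j).+1 %% 4 == 0)%N then -3 else 1).

From mathcomp Require Import all_boot all_order all_algebra.
From mathcomp Require Import zify ring lra.
Set Implicit Arguments. Unset Strict Implicit. Unset Printing Implicit Defensive.
Import Order.TTheory GRing.Theory Num.Theory.

(* Write n = 2k + 2. Dropping the first coordinate, V_0 is the set of sign
   patterns of the k-subsets of Z/(2k+1). Translating a k-subset by t adds k t
   to the sum of its elements, and k is invertible modulo 2k+1 (with inverse
   -2), so translation acts freely on k-subsets and every orbit contains
   exactly one zero-sum subset. An orbit sums to z = (2k+1, -1, ..., -1), hence
   g(V_0) = (M/2) z with M = C(2k+1, k)/(2k+1) orbits, and a union of orbits is
   in P(V_0).
   Since C(2k+1, k) = C(2k+2, k+1)/2 and the 2-adic valuation of C(2m, m) is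
   the number of binary digits 1 of m, M is even exactly when k+1 is not a
   power of 2; then half of the orbits give g(V_0). Otherwise M = 2r+1 and
   g(V_0) - w/2 = r z + (z - w)/2, where (z - w)/2 is the sum of an explicit
   family of k elements of V_0; r orbits avoiding that family remain because
   C(2k+1, k) >= (2k+1)(2k-1) for k >= 3. *)

Section CentralBinomial.

Lemma logn2_odd k : logn 2 k.*2.+1 = 0.
Proof. by apply: logn_coprime; rewrite coprime_sym coprimen2 /= odd_double. Qed.

Lemma logn2_fact_double k : logn 2 (k.*2)`! = k + logn 2 k`!.
Proof.
elim: k => [|k IHk] //.
rewrite doubleS !factS lognM // ?muln_gt0 ?fact_gt0 // lognM ?fact_gt0 // IHk.
rewrite logn2_odd -doubleS -mul2n !lognM ?fact_gt0 // -[logn 2 2]/1; lia.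
Qed.

Lemma logn2_bin_double k : logn 2 'C(k.*2, k) + logn 2 k`! = k.
Proof.
have := congr1 (logn 2) (bin_fact (leq_addl k k)).
rewrite addnK addnn !lognM ?fact_gt0 ?bin_gt0 ?muln_gt0 ?fact_gt0 ?leq_addl //.
  by rewrite logn2_fact_double; lia.
by rewrite -addnn leq_addl.
Qed.

Lemma logn2_bin_double_even k :
  logn 2 'C((k.*2).*2, k.*2) = logn 2 'C(k.*2, k).
Proof.
have := logn2_bin_double k.*2; have := logn2_bin_double k.
rewrite logn2_fact_double; lia.
Qed.

Lemma logn2_bin_double_odd k :
  logn 2 'C((k.*2.+1).*2, k.*2.+1) = (logn 2 'C(k.*2, k)).+1.
Proof.
have := logn2_bin_double k.*2.+1; have := logn2_bin_double k.
rewrite factS lognM ?fact_gt0 // logn2_odd logn2_fact_double; lia.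
Qed.

Lemma logn2_bin_double_gt0 k : 0 < k -> 0 < logn 2 'C(k.*2, k).
Proof.
elim/ltn_ind: k => k IHk k_gt0; rewrite -[k]odd_double_half.
case k_odd: (odd k) => /=; first by rewrite add1n logn2_bin_double_odd.
rewrite add0n logn2_bin_double_even; apply: IHk; lia.
Qed.

Lemma logn2_bin_double_pow2 j : logn 2 'C((2 ^ j).*2, 2 ^ j) = 1.
Proof. by elim: j => [|j IHj] //; rewrite expnS mul2n logn2_bin_double_even. Qed.

Lemma logn2_bin_double_eq1 k :
  0 < k -> logn 2 'C(k.*2, k) = 1 -> exists j, k = 2 ^ j.
Proof.
elim/ltn_ind: k => k IHk k_gt0; rewrite -[k]odd_double_half.
case k_odd: (odd k) => /=.
  rewrite add1n logn2_bin_double_odd => /eqP; rewrite eqSS => /eqP log0.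
  have [half0 | half_gt0] := posnP k./2; first by exists 0; rewrite half0.
  by have := logn2_bin_double_gt0 half_gt0; rewrite log0.
rewrite add0n logn2_bin_double_even => /IHk [||j ->]; try lia.
by exists j.+1; rewrite expnS mul2n.
Qed.

Lemma odd_bin_double_pred k :
  0 < k -> odd 'C(k.*2.-1, k.-1) <-> exists j, k = 2 ^ j.
Proof.
move=> k_gt0; set c := 'C(k.*2.-1, k.-1).
have c_gt0 : 0 < c by rewrite bin_gt0; lia.
have bin2 : 'C(k.*2, k) = c * 2.
  have := mul_bin_diag k.*2 k.-1; rewrite prednK // => bin_diag.
  by apply/eqP; rewrite -(eqn_pmul2l k_gt0) -bin_diag; apply/eqP; nia.
have odd_c : odd c = (logn 2 c == 0).
  by rewrite -[odd c]negbK -dvdn2 -[2]/(2 ^ 1) pfactor_dvdn // lt0n negbK.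
rewrite odd_c; split => [/eqP logc0 | [j k_pow2]].
  by apply: logn2_bin_double_eq1; rewrite // bin2 lognM // logc0.
have := logn2_bin_double_pow2 j; rewrite -k_pow2 bin2 lognM // -[logn 2 2]/1.
by rewrite addn1 => /eqP.
Qed.

Lemma bin_odd_center_rec a :
  a.+2 * 'C(a.+1.*2.+1, a.+1) = (a.+1.*2.+1).*2 * 'C(a.*2.+1, a).
Proof.
have diag := mul_bin_diag (a.+1.*2.+1) a.
have down := mul_bin_down (a.+1.*2) a.
have sub : a.+1.*2 - a = a.+2 by lia.
rewrite /= sub in diag down.
apply/eqP; rewrite -(eqn_pmul2l (ltn0Sn a)); apply/eqP.
rewrite mulnCA -diag; nia.
Qed.

Lemma bin_odd_center_ge a :
  2 < a -> a.*2.+1 * a.*2.-1 <= 'C(a.*2.+1, a).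
Proof.
elim: a => [|a IHa] // a_gt2.
have [-> //|a_neq2] := eqVneq a 2.
have IH := IHa ltac:(lia).
rewrite -(leq_pmul2l (ltn0Sn a.+1)) bin_odd_center_rec.
apply: leq_trans (leq_mul (leqnn _) IH); nia.
Qed.

End CentralBinomial.

Local Open Scope ring_scope.

Lemma exists_subset_card (T : finType) (A : {set T}) k :
  (k <= #|A|)%N -> exists2 B : {set T}, B \subset A & #|B| = k.
Proof.
move=> /card_geqP [s [s_uniq s_size sA]]; exists [set x in s].
  by apply/subsetP => x; rewrite inE => /sA.
by rewrite cardsE (card_uniqP s_uniq).
Qed.

Section Translates.
Variable G : finZmodType.
Implicit Types (t x : G) (A : {set G}).

Definition shift t A : {set G} := [set x + t | x in A].
Definition setsum A : G := \sum_(x in A) x.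

Lemma mem_shift t A x : (x \in shift t A) = (x - t \in A).
Proof.
apply/imsetP/idP => [[y yA ->]|xtA]; first by rewrite addrK.
by exists (x - t); rewrite ?subrK.
Qed.

Lemma card_shift t A : #|shift t A| = #|A|.
Proof. by rewrite card_imset // => x y /addIr. Qed.

Lemma shiftK t : cancel (shift t) (shift (- t)).
Proof. by move=> A; apply/setP => x; rewrite !mem_shift opprK addrK. Qed.

Lemma setsum_shift t A : setsum (shift t A) = setsum A + t *+ #|A|.
Proof.
by rewrite /setsum big_imset /= ?big_split ?sumr_const // => x y _ _ /addIr.
Qed.
End Translates.
Arguments shift {G} t A.
Arguments setsum {G} A.

Lemma sum_sgnb_mem (T : finType) (A : {set T}) :
  \sum_x sgnb (x \in A) = #|A|%:R *+ 2 - #|T|%:R.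
Proof.
rewrite (bigID (mem A)) /= -(cardC A) natrD.
rewrite [X in X + _](eq_bigr (fun=> 1)) => [|x ->] //.
rewrite [X in _ + X](eq_bigr (fun=> -1)) => [|x /negbTE ->] //.
by rewrite !sumr_const mulNrn; lra.
Qed.

Lemma sgnvE n (b : {ffun 'I_n -> bool}) i : sgnv b 0 i = sgnb (b i).
Proof. by rewrite mxE. Qed.

Lemma V0E n (b : {ffun 'I_n.+1 -> bool}) :
  (b \in V0 n.+1) = b ord0 && (\sum_i sgnb (b i) == 0).
Proof.
rewrite inE; congr andb; last by under eq_bigr do rewrite sgnvE.
apply/forallP/idP => [/(_ ord0)|b0 i]; first by rewrite sgnvE; case: (b ord0).
by apply/implyP => /eqP i0; rewrite (_ : i = ord0) ?sgnvE ?b0 //; apply: val_inj.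
Qed.

Section SignPatterns.
Variable N : nat.
Implicit Types (A : {set 'I_N.+1}) (x : 'I_N.+1).

Definition pattern A : {ffun 'I_N.+2 -> bool} :=
  [ffun i => if unlift ord0 i is Some j then j \in A else true].

Lemma pattern0 A : pattern A ord0.
Proof. by rewrite ffunE unlift_none. Qed.

Lemma pattern_lift A x : pattern A (lift ord0 x) = (x \in A).
Proof. by rewrite ffunE liftK. Qed.

Lemma pattern_inj : injective pattern.
Proof. by move=> A B eqAB; apply/setP => x; rewrite -!pattern_lift eqAB. Qed.

Lemma patternP (b : {ffun 'I_N.+2 -> bool}) :
  b ord0 -> pattern [set x | b (lift ord0 x)] = b.
Proof.
move=> b0; apply/ffunP => i; rewrite ffunE.
by case: unliftP => [x ->|->]; rewrite ?inE.
Qed.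

Lemma sum_sgnb_pattern A : \sum_i sgnb (pattern A i) = #|A|%:R *+ 2 - N%:R.
Proof.
rewrite big_ord_recl pattern0.
under eq_bigr do rewrite pattern_lift.
rewrite sum_sgnb_mem card_ord /sgnb -natr1; lra.
Qed.

Lemma sgnv_pattern_mirror A x : x \notin A ->
  sgnv (pattern A) + sgnv (pattern (~: A :\ x)) =
  2 *: (delta_mx 0 ord0 - delta_mx 0 (lift ord0 x)).
Proof.
move=> xA; apply/rowP => i; rewrite !mxE eqxx /=.
case: (unliftP ord0 i) => [y ->|->]; rewrite ?pattern_lift ?pattern0 //.
rewrite !inE [lift _ _ == ord0]eq_sym (negbTE (neq_lift _ _)) (inj_eq lift_inj).
have [->|_] := eqVneq y x; first by rewrite (negbTE xA) /sgnb /=; lra.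
by rewrite /sgnb; case: (y \in A) => /=; lra.
Qed.

Lemma card_mirror A x : x \notin A -> #|~: A :\ x| = (N - #|A|)%N.
Proof.
move=> xA; have := cardsC A; rewrite (cardsD1 x (~: A)) !inE xA card_ord /=.
by move: #|_ :\ x| => c; lia.
Qed.
End SignPatterns.
Arguments pattern {N} A.

Definition ksubsets k : {set {set 'I_k.*2.+1}} := [set A : {set _} | #|A| == k].

Lemma in_ksubsets k (A : {set 'I_k.*2.+1}) : (A \in ksubsets k) = (#|A| == k).
Proof. by rewrite inE. Qed.

Lemma V0_pattern k : V0 k.*2.+2 = pattern @: ksubsets k.
Proof.
apply/setP => b; rewrite V0E; apply/andP/imsetP => [[b0 sum0]|[A]].
  exists [set x | b (lift ord0 x)]; last by rewrite patternP.
  move: sum0; rewrite -{1}(patternP b0) sum_sgnb_pattern in_ksubsets subr_eq0.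
  by rewrite -mulr_natr -natrM eqr_nat muln2 => /eqP/double_inj ->.
rewrite in_ksubsets => /eqP cardA ->; rewrite pattern0 sum_sgnb_pattern cardA.
by rewrite -mulr_natr -natrM muln2 subrr.
Qed.

Lemma inPV0_pattern k (S : {set {set 'I_k.*2.+1}}) :
  S \subset ksubsets k -> inPV0 (\sum_(A in S) sgnv (pattern A)).
Proof.
move=> Sk; exists (pattern @: S); split; first by rewrite V0_pattern imsetS.
by rewrite big_imset //; move=> A B _ _ /pattern_inj.
Qed.

Lemma gV0_pattern k :
  gV0 k.*2.+2 = 2^-1 *: \sum_(A in ksubsets k) sgnv (pattern A).
Proof. by rewrite /gV0 V0_pattern big_imset //; move=> A B _ _ /pattern_inj. Qed.

Section Orbits.
Variable k : nat.
Local Notation G := 'I_k.*2.+1.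
Implicit Types (t : G) (A : {set G}) (R : {set {set G}}).

Lemma mulrn_double_opp (x : G) : x *+ k *+ 2 = - x.
Proof.
apply/eqP; rewrite -subr_eq0 opprK -mulrnA -mulrSr muln2 Zp_mulrn.
by apply/eqP; apply: val_inj; rewrite [LHS]modnMl.
Qed.

(* [reps] is a transversal of the translation orbits, [rep] the projection
   onto it. *)
Definition reps : {set {set G}} := [set A in ksubsets k | setsum A == 0].
Definition rep A : {set G} := shift (setsum A *+ 2) A.
Definition orbits R : {set {set G}} := [set shift p.1 p.2 | p in setX [set: G] R].

Lemma reps_ksubsets : reps \subset ksubsets k.
Proof. by apply/subsetP => A; rewrite inE => /andP[]. Qed.

Lemma rep_reps A : A \in ksubsets k -> rep A \in reps.
Proof.
rewrite in_ksubsets => /eqP cardA.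
rewrite !inE card_shift cardA eqxx setsum_shift /= cardA.
by rewrite mulrnAC mulrn_double_opp subrr.
Qed.

Lemma rep_shift t A : A \in reps -> rep (shift t A) = A.
Proof.
rewrite !inE => /andP[/eqP cardA /eqP sumA].
rewrite /rep setsum_shift sumA add0r cardA mulrn_double_opp.
exact: shiftK.
Qed.

Lemma shift_injl A : A \in ksubsets k -> injective (fun t => shift t A).
Proof.
rewrite in_ksubsets => /eqP cardA t t' /(congr1 setsum).
rewrite !setsum_shift cardA => /addrI/(congr1 (fun x => - x *+ 2)).
by rewrite !mulNrn !mulrn_double_opp !opprK.
Qed.

Lemma orbits_inj R :
  R \subset reps -> {in setX [set: G] R &, injective (fun p => shift p.1 p.2)}.
Proof.
move=> /subsetP Rreps [t A] [t' A'] /setXP[_ /Rreps Areps] /setXP[_ /Rreps A'reps] /=.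
move=> eq_shift; have eqAA' : A = A'.
  by rewrite -(rep_shift t Areps) eq_shift rep_shift.
subst A'; congr pair; apply: shift_injl eq_shift.
exact: subsetP reps_ksubsets _ Areps.
Qed.

Lemma orbits_ksubsets R : R \subset reps -> orbits R \subset ksubsets k.
Proof.
move=> /subsetP Rreps; apply/subsetP => _ /imsetP[[t A] /setXP[_ /Rreps Areps] ->].
by move: Areps; rewrite !inE card_shift => /andP[].
Qed.

Lemma orbits_reps : orbits reps = ksubsets k.
Proof.
apply/eqP; rewrite eqEsubset orbits_ksubsets //=; apply/subsetP => B Bk.
apply/imsetP; exists (- (setsum B *+ 2), rep B); last exact/esym/shiftK.
by rewrite in_setX in_setT rep_reps.
Qed.

Lemma bin_reps : 'C(k.*2.+1, k) = (k.*2.+1 * #|reps|)%N.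
Proof.
have -> : 'C(k.*2.+1, k) = #|ksubsets k| by rewrite card_draws card_ord.
rewrite -orbits_reps card_in_imset; last exact: orbits_inj.
by rewrite (cardsX [set: G] reps) cardsT card_ord.
Qed.

Definition orbit_vec : 'rV[rat]_k.*2.+2 :=
  \row_i (if i == ord0 then k.*2.+1%:R else -1).

Lemma sum_orbit A : A \in ksubsets k ->
  \sum_(t : G) sgnv (pattern (shift t A)) = orbit_vec.
Proof.
rewrite in_ksubsets => /eqP cardA; apply/rowP => i; rewrite summxE !mxE.
case: (unliftP ord0 i) => [j ->|->]; last first.
  by under eq_bigr do rewrite sgnvE pattern0; rewrite sumr_const card_ord.
under eq_bigr do rewrite sgnvE pattern_lift mem_shift.
rewrite (reindex_inj (subrI j)) /=.
under eq_bigr do rewrite opprB addrC subrK.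
by rewrite sum_sgnb_mem card_ord cardA -mulr_natr -natrM muln2 -addn1 natrD; lra.
Qed.

Lemma sum_orbits R : R \subset reps ->
  \sum_(A in orbits R) sgnv (pattern A) = #|R|%:R *: orbit_vec.
Proof.
move=> Rreps; rewrite big_imset /=; last exact: orbits_inj.
rewrite (eq_bigl (fun p => xpredT p.1 && (p.2 \in R))); last first.
  by move=> [t A]; rewrite in_setX in_setT.
rewrite -(pair_big xpredT (fun A => A \in R) (fun t A => sgnv (pattern (shift t A)))).
rewrite exchange_big /= scaler_nat -sumr_const.
apply: eq_bigr => A AR; apply: sum_orbit.
exact: subsetP reps_ksubsets _ (subsetP Rreps _ AR).
Qed.

Lemma gV0_reps : gV0 k.*2.+2 = 2^-1 *: (#|reps|%:R *: orbit_vec).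
Proof. by rewrite gV0_pattern -orbits_reps sum_orbits. Qed.

Lemma odd_reps : odd #|reps| <-> exists j, k.+1 = (2 ^ j)%N.
Proof.
have := odd_bin_double_pred (ltn0Sn k).
by rewrite doubleS /= bin_reps oddM /= odd_double.
Qed.

Lemma inPV0_orbits_add r (E : {set {set G}}) :
  E \subset ksubsets k -> (r + #|E| <= #|reps|)%N ->
  inPV0 (r%:R *: orbit_vec + \sum_(A in E) sgnv (pattern A)).
Proof.
move=> Ek rE.
have [R Rfree cardR] :
    exists2 R : {set {set G}}, R \subset reps :\: rep @: E & #|R| = r.
  apply: exists_subset_card; rewrite cardsD.
  move: rE (subset_leq_card (subsetIr reps (rep @: E))) (leq_imset_card rep E).
  by move: #|E| #|reps| #|reps :&: _| #|rep @: E| => e c i q; lia.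
have Rreps : R \subset reps := subset_trans Rfree (subsetDl _ _).
have disjRE : [disjoint orbits R & E].
  rewrite disjoints_subset; apply/subsetP => _ /imsetP[[t A] /setXP[_ AR] ->].
  rewrite inE; apply: contraTN (subsetP Rfree _ AR) => AE.
  by rewrite inE negb_and negbK -(rep_shift t (subsetP Rreps _ AR)) imset_f.
rewrite -cardR -sum_orbits // -bigU //=.
rewrite (eq_bigl (mem (orbits R :|: E))) => [|B]; last by rewrite !inE.
by apply: inPV0_pattern; rewrite subUset orbits_ksubsets.
Qed.

Lemma reps_ge : k != 2 -> (k.*2.-1 <= #|reps|)%N.
Proof.
have reps_gt0 : (0 < #|reps|)%N.
  have : (0 < 'C(k.*2.+1, k))%N by rewrite bin_gt0 -addnn leqW ?leq_addr.
  by rewrite bin_reps muln_gt0 => /andP[].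
move=> k_neq2; have [k_gt2|k_le2] := ltnP 2 k.
  by have := bin_odd_center_ge k_gt2; rewrite bin_reps leq_pmul2l.
by apply: leq_trans reps_gt0; lia.
Qed.

Lemma inPV0_gV0 : ~ (exists j, k.+1 = (2 ^ j)%N) -> inPV0 (gV0 k.*2.+2).
Proof.
move=> not_pow2; have even_reps : ~~ odd #|reps| by apply/negP => /odd_reps.
have [R Rreps cardR] := exists_subset_card (leq_div #|reps| 2).
have -> : gV0 k.*2.+2 = \sum_(A in orbits R) sgnv (pattern A).
  rewrite gV0_reps sum_orbits // scalerA cardR -{1}(divnK (_ : 2 %| #|reps|)%N).
    by rewrite natrM; congr (_ *: _); field.
  by rewrite dvdn2.
exact/inPV0_pattern/orbits_ksubsets.
Qed.

Lemma inPV0_gV0_sub_half (E : {set {set G}}) (v : 'rV[rat]_k.*2.+2) :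
  odd #|reps| -> k != 2 -> E \subset ksubsets k -> (#|E| <= k)%N ->
  \sum_(A in E) sgnv (pattern A) = 2^-1 *: (orbit_vec - v) ->
  inPV0 (gV0 k.*2.+2 - 2^-1 *: v).
Proof.
move=> odd_reps k_neq2 Ek cardE sumE.
have reps_odd : #|reps| = (#|reps|./2).*2.+1.
  by rewrite -[LHS]odd_double_half odd_reps add1n.
have rE : (#|reps|./2 + #|E| <= #|reps|)%N.
  move: cardE (reps_ge k_neq2) reps_odd.
  by move: #|E| #|reps| => e c; lia.
have -> : gV0 k.*2.+2 - 2^-1 *: v =
    #|reps|./2%:R *: orbit_vec + \sum_(A in E) sgnv (pattern A).
  rewrite sumE gV0_reps {1}reps_odd; apply/rowP => i.
  by rewrite !mxE -addnn -addn1 !natrD; field.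
exact: inPV0_orbits_add.
Qed.
End Orbits.

Section PowerOfTwoWitness.
Variable h : nat.
Local Notation k := h.*2.+1.
Local Notation G := 'I_k.*2.+1.
Implicit Types (c : 'I_h) (j : G).

(* [sgnv (pattern base)] agrees with (z - w)/2 except at coordinate 0 and at
   the coordinates [lift ord0 (xpos c)]; by [sgnv_pattern_mirror], the pair
   [swapped c], [mirrored c] adds 2 at coordinate 0 and -2 at
   [lift ord0 (xpos c)]. *)
Definition base : {set G} := [set j : G | (2 <= j %% 4)%N].
Definition xpos c : G := inord (4 * c + 3).
Definition ypos c : G := inord (4 * c + 4).
Definition swapped c : {set G} := ypos c |: base :\ xpos c.
Definition mirrored c : {set G} := ~: swapped c :\ xpos c.
Definition witness (p : 'I_h * bool) : {set G} :=
  if p.2 then mirrored p.1 else swapped p.1.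
Definition witnesses : {set {set G}} := base |: [set witness p | p : 'I_h * bool].

Lemma val_xpos c : xpos c = (4 * c + 3)%N :> nat.
Proof. by rewrite inordK //; have := ltn_ord c; lia. Qed.

Lemma val_ypos c : ypos c = (4 * c + 4)%N :> nat.
Proof. by rewrite inordK //; have := ltn_ord c; lia. Qed.

Lemma count_mod4_ge2 n :
  (\sum_(0 <= j < 4 * n + 3) (2 <= j %% 4) = n.*2.+1)%N.
Proof.
elim: n => [|n IHn]; first by rewrite !big_nat_recr ?big_geq.
have -> : (4 * n.+1 + 3 = (4 * n + 3).+4)%N by lia.
have mod4 r : (4 * n + r = r %[mod 4])%N by rewrite mulnC modnMDl.
by rewrite !big_nat_recr //= IHn -!addnS !mod4 /=; lia.
Qed.

Lemma card_base : #|base| = k.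
Proof.
rewrite -sum1_card big_mkcond /=.
rewrite (eq_bigr (fun j : G => (2 <= j %% 4)%N : nat)) => [|j _]; last by rewrite inE.
rewrite -(big_mkord xpredT (fun i : nat => (2 <= i %% 4)%N : nat)).
have -> : (k.*2.+1 = 4 * h + 3)%N by lia.
exact: count_mod4_ge2.
Qed.

Lemma mem_base j : (j \in base) = (2 <= j %% 4)%N.
Proof. by rewrite inE. Qed.

Lemma mem_swapped c j :
  (j \in swapped c) = (j == ypos c) || (j != xpos c) && (j \in base).
Proof. by rewrite !inE. Qed.

Lemma mem_mirrored c j : (j \in mirrored c) = (j != xpos c) && (j \notin swapped c).
Proof. by rewrite !inE andbC. Qed.

Lemma ypos_neq_xpos c c' : ypos c != xpos c'.
Proof. by rewrite -val_eqE /= val_xpos val_ypos; apply/eqP; lia. Qed.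

Lemma eq_ypos c c' : (ypos c == ypos c') = (c == c').
Proof. by rewrite -!val_eqE /= !val_ypos; apply/eqP/eqP; lia. Qed.

Lemma ypos_notin_base c : ypos c \notin base.
Proof. by rewrite mem_base val_ypos -mulnSr modnMr. Qed.

Lemma ord0_notin_swapped c : ord0 \notin swapped c.
Proof.
rewrite mem_swapped mem_base -!val_eqE /= val_xpos val_ypos.
by rewrite addn3 addn4.
Qed.

Lemma xpos_notin_swapped c : xpos c \notin swapped c.
Proof. by rewrite mem_swapped eqxx eq_sym (negbTE (ypos_neq_xpos c c)). Qed.

Lemma ord0_witness p : (ord0 \in witness p) = p.2.
Proof.
case: p => c [] /=;
  rewrite /witness /= ?mem_mirrored (negbTE (ord0_notin_swapped c)) //.
by rewrite andbT -val_eqE /= val_xpos addn3.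
Qed.

Lemma ypos_witness c p : (ypos c \in witness p) = (c == p.1) (+) p.2.
Proof.
case: p => c' b; rewrite /witness /=.
have in_swapped : (ypos c \in swapped c') = (c == c').
  by rewrite mem_swapped eq_ypos ypos_neq_xpos (negbTE (ypos_notin_base c)) orbF.
by case: b; rewrite ?mem_mirrored in_swapped ?ypos_neq_xpos ?addbT ?addbF.
Qed.

Lemma witness_inj : injective witness.
Proof.
move=> [c b] [c' b'] eq_w.
have eq_b : b = b' by have := ord0_witness (c, b); rewrite eq_w ord0_witness.
subst b'; congr pair; apply/eqP.
by have := ypos_witness c (c, b); rewrite eq_w ypos_witness eqxx => /addIb.
Qed.

Lemma base_notin_witness : base \notin [set witness p | p : 'I_h * bool].
Proof.
apply/imsetP => -[[c b] _ eq_base].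
have b_false : b = false by have := ord0_witness (c, b); rewrite -eq_base mem_base.
have := ypos_witness c (c, b); rewrite -eq_base b_false eqxx.
by rewrite (negbTE (ypos_notin_base c)).
Qed.

Lemma card_witnesses : #|witnesses| = k.
Proof.
rewrite cardsU1 base_notin_witness card_imset; last exact: witness_inj.
by rewrite card_prod card_ord card_bool add1n muln2.
Qed.

Lemma witnesses_ksubsets : witnesses \subset ksubsets k.
Proof.
have swapped_card c : #|swapped c| = k.
  have y_notin : ypos c \notin base :\ xpos c.
    by rewrite in_setD1 (negbTE (ypos_notin_base c)) andbF.
  have x_in : xpos c \in base by rewrite mem_base val_xpos mulnC modnMDl.
  rewrite cardsU1 y_notin; have := cardsD1 (xpos c) base; rewrite card_base x_in.
  by move: #|_ :\ _| => n /=; lia.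
apply/subsetP => A; rewrite !inE => /predU1P[->|/imsetP[[c []] _ ->]] /=.
- by rewrite card_base.
- rewrite /witness /mirrored card_mirror ?xpos_notin_swapped // swapped_card.
  by rewrite -addnn addnK.
- by rewrite swapped_card.
Qed.

Lemma sum_eq_xpos j : \sum_(c < h) ((j == xpos c)%:R : rat) = (j %% 4 == 3)%N%:R.
Proof.
have [j3|j_not3] := boolP (j %% 4 == 3)%N; last first.
  rewrite big1 // => c _; case: eqP => // j_x; case/negP: j_not3.
  by rewrite j_x val_xpos mulnC modnMDl.
have j_lt : (j %/ 4 < h)%N by have := ltn_ord j; lia.
rewrite (bigD1 (Ordinal j_lt)) //= big1 ?addr0.
  by rewrite -val_eqE /= val_xpos /=; case: eqP => //; lia.
move=> c c_neq; case: eqP => // j_x; case/eqP: c_neq; apply: val_inj => /=.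
by rewrite j_x val_xpos; lia.
Qed.

Lemma sum_witnesses :
  \sum_(A in witnesses) sgnv (pattern A) = 2^-1 *: (orbit_vec k - wvec k.*2.+2).
Proof.
rewrite big_setU1 ?base_notin_witness //= big_imset /=; last first.
  by move=> p q _ _ /witness_inj.
rewrite -(pair_bigA _ (fun c b => sgnv (pattern (witness (c, b))))) /=.
under eq_bigr do rewrite big_bool /= addrC sgnv_pattern_mirror ?xpos_notin_swapped //.
apply/rowP => i; rewrite !mxE summxE.
under eq_bigr do rewrite !mxE eqxx /=.
rewrite -mulr_sumr sumrB sumr_const card_ord.
case: (unliftP ord0 i) => [j ->|->]; last first.
  rewrite pattern0 eqxx big1 => [|c _]; last by rewrite (negbTE (neq_lift _ _)).
  have -> : (k.*2.+1)%:R = (4 * h + 3)%N%:R :> rat by congr _%:R; lia.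
  by rewrite /sgnb natrD natrM /=; lra.
rewrite pattern_lift mem_base [lift _ _ == ord0]eq_sym (negbTE (neq_lift _ _)) /=.
under eq_bigr do rewrite (inj_eq lift_inj).
rewrite sum_eq_xpos /= /bump leq0n add1n.
have -> : (j.+2 %% 4 == 0)%N = (j %% 4 == 2)%N by apply/eqP/eqP; lia.
have : (j %% 4 < 4)%N by rewrite ltn_pmod.
by case: (j %% 4)%N => [|[|[|[|r]]]] //= _; rewrite /sgnb; lra.
Qed.

Lemma inPV0_gV0_wvec :
  odd #|reps k| -> inPV0 (gV0 k.*2.+2 - 2^-1 *: wvec k.*2.+2).
Proof.
move=> odd_reps; apply: inPV0_gV0_sub_half sum_witnesses => //.
- by apply/eqP; lia.
- exact: witnesses_ksubsets.
- by rewrite card_witnesses.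
Qed.
End PowerOfTwoWitness.

Unset Implicit Arguments.
Theorem lemma4p3 (n : nat) (hn : (0 < n)%N) (hev : ~~ odd n) :
  ((~ exists k : nat, n = (2 ^ k)%N) -> inPV0 (gV0 n)) /\
  ((exists k : nat, n = (2 ^ k)%N) -> (2 < n)%N ->
     inPV0 (gV0 n - 2^-1 *: wvec n)).
Proof.
have [k ->] : exists k, n = k.*2.+2.
  have := odd_double_half n; rewrite (negbTE hev) add0n => nE.
  by exists n./2.-1; lia.
have pow2E : (exists j, k.*2.+2 = (2 ^ j)%N) <-> (exists j, k.+1 = (2 ^ j)%N).
  split=> [[[|j]]|[j kE]]; rewrite ?expnS; first lia.
    by exists j; lia.
  by exists j.+1; rewrite expnS -kE; lia.
split=> [not_pow2 | pow2 k_gt0].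
  by apply: inPV0_gV0 => /pow2E.
have [j kE] := proj1 pow2E pow2.
have [h hE] : exists h, k = h.*2.+1.
  case: j kE => [|j]; rewrite ?expnS => kE; first lia.
  by exists (2 ^ j).-1; have := expn_gt0 2 j; lia.
subst k; apply: inPV0_gV0_wvec; apply/odd_reps.
by exists j.
Qed.
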